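(* The least fixed point $(T_\infty,P_\infty)$ of $\Gamma_{\mathscr{TP}}$ (the stage at which the sequence $(T_\alpha,P_\alpha)$ stabilizes) is consistent, i.e. $T_\infty^+\cap T_\infty^-=\emptyset$ and $P_\infty^+\cap P_\infty^-=\emptyset$, and (hence) sound, i.e. for every $\mathcal L$-sentence $\varphi$, either $(\mathbb N,T_\infty,P_\infty)\not\models_{SK}\varphi\vee\neg\varphi$ or $(\mathbb N,T_\infty,P_\infty)\not\models_{SK}\mathscr P(\varphi)$.
   Context: Language. Let $\mathcal L_{\mathbb N}$ be the language of first-order Peano arithmetic and $\mathcal L=\mathcal L_{\mathbb N}\cup\{\mathrm T,\mathrm P\}$ with unary predicates $\mathrm T,\mathrm P$. $\mathcal L$-formulas are in Tait style: literals are $s=t$, $s\neq t$, $\mathrm Tt$, $\neg\mathrm Tt$, $\mathrm Pt$, $\neg\mathrm Pt$; formulas are built from literals by $\wedge,\vee,\forall,\exists$; negation of an arbitrary formula is defined by De Morgan dualities with $\neg\neg\varphi:=\varphi$. A standard Gödel numbering is fixed; $\#e$ is the code of $e$, $\ulcorner e\urcorner$ the numeral of $\#e$, $\mathrm{val}(t)$ the value of a closed term $t$, $\dot\neg$ the primitive recursive function with $\dot\neg(\#\varphi)=\#\neg\varphi$; $\mathrm T\varphi,\mathrm P\varphi$ abbreviate $\mathrm T\ulcorner\varphi\urcorner,\mathrm P\ulcorner\varphi\urcorner$. Semantics. A partial model is $(\mathbb N,T,P)$ with $\mathbb N$ the standard model and $T=(T^+,T^-)$, $P=(P^+,P^-)$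 pairs of subsets of $\omega$. Strong Kleene satisfaction $\models_{SK}$: arithmetic literals evaluated in $\mathbb N$; $\mathrm Tt$ satisfied iff $\mathrm{val}(t)\in T^+$, $\neg\mathrm Tt$ iff $\mathrm{val}(t)\in T^-$, likewise for $\mathrm P$ with $P^\pm$; conjunction iff both, disjunction iff at least one, $\forall x\varphi(x)$ iff all numeral instances, $\exists x\varphi(x)$ iff some numeral instance. Base paradoxicality. $\mathrm{PA}[\mathrm{SK}]$ is the two-sided sequent calculus for Strong Kleene logic with identity in $\mathcal L$ (initial sequents $\varphi\Rightarrow\varphi$, cut, weakening, the rule from $\Gamma\Rightarrow\Delta,\varphi$ infer $\neg\varphi,\Gamma\Rightarrow\Delta$, usual rules for $\wedge,\vee,\forall,\exists$, reflexivity $\Rightarrow t=t$, replacement from $\Gamma\Rightarrow\Delta,\varphi(t)$ infer $\Gamma\Rightarrow\Delta,s\neq t,\varphi(s)$) plus the initial sequents of Peano arithmetic and the induction rule for all $\mathcal L$-formulas. A sentence $\varphi$ is base paradoxical iff $\mathrm{PA}[\mathrm{SK}]$ derives $\varphi\Leftrightarrow\neg\mathrm T\varphi$ and $\neg\varphi\Leftrightarrow\mathrm T\varphi$ ($\Leftrightarrow$ meaning both sequents). $B(x)$ is an $\mathcal L_{\mathbb N}$-formula defining in $\mathbb N$ the set of codes of base paradoxical sentences, and $\Pi(x):=B(x)\vee B(\dot\neg x)$. Jump and sequence. Let $\mathscr P(x)$ be the $\mathcal L$-formula which is the disjunction of: (1) $x$ codes a sentence and $\Pi(x)$; (2) $x$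 codes a sentence $\mathrm Tt$ ($t$ a closed term) and $\mathrm P(\mathrm{val}(t))$; (3) $x$ codes a sentence $\neg\mathrm Tt$ and $\mathrm P(\mathrm{val}(t))$; (4) $x$ codes a sentence $\psi\wedge\theta$ and $(\mathrm P\psi\wedge\mathrm P\theta)\vee(\mathrm T\psi\wedge\mathrm P\theta)\vee(\mathrm T\theta\wedge\mathrm P\psi)$; (5) $x$ codes a sentence $\psi\vee\theta$ and $(\mathrm P\psi\wedge\mathrm P\theta)\vee(\neg\mathrm T\psi\wedge\mathrm P\theta)\vee(\neg\mathrm T\theta\wedge\mathrm P\psi)$; (6) $x$ codes a sentence $\forall v\psi$ and $\exists y\,\mathrm P\psi(\dot y)\wedge\forall y(\mathrm P\psi(\dot y)\vee\mathrm T\psi(\dot y))$; (7) $x$ codes a sentence $\exists v\psi$ and $\exists y\,\mathrm P\psi(\dot y)\wedge\forall y(\mathrm P\psi(\dot y)\vee\neg\mathrm T\psi(\dot y))$; here $\psi(\dot y)$ is the code of the result of substituting the numeral of $y$ for $v$. Write $\mathscr P(\varphi)$ for $\mathscr P(\ulcorner\varphi\urcorner)$. Define $\Gamma_{\mathscr{TP}}(T,P)=\big((\{\#\varphi:(\mathbb N,T,P)\models_{SK}\varphi\},\{\#\varphi:(\mathbb N,T,P)\models_{SK}\neg\varphi\}),(\{\#\varphi:(\mathbb N,T,P)\models_{SK}\mathscr P(\varphi)\},\{\#\varphi:(\mathbb N,T,P)\models_{SK}\varphi\vee\neg\varphi\})\big)$, $\varphi$ ranging over $\mathcal L$-sentences.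 Define $(T_0,P_0)=((\emptyset,\emptyset),(\emptyset,\emptyset))$, $(T_{\beta+1},P_{\beta+1})=\Gamma_{\mathscr{TP}}(T_\beta,P_\beta)$, $(T_\lambda,P_\lambda)=\bigcup_{\beta<\lambda}(T_\beta,P_\beta)$ (componentwise union) for limit $\lambda$. This sequence reaches a fixed point $(T_\infty,P_\infty)=\Gamma_{\mathscr{TP}}(T_\infty,P_\infty)$. *)

From Stdlib Require Import Arith List.
Import ListNotations.

Inductive term : Type :=
| tvar  : nat -> term
| tzero : term
| tsucc : term -> term
| tplus : term -> term -> term
| tmult : term -> term -> term.

Inductive form : Type :=
| fEq  : term -> term -> form
| fNeq : term -> term -> form
| fT   : term -> form
| fNT  : term -> form
| fP   : term -> form
| fNP  : term -> form
| fAnd : form -> form -> form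
| fOr  : form -> form -> form
| fAll : form -> form
| fEx  : form -> form.

Fixpoint neg (phi : form) : form :=
  match phi with
  | fEq s t => fNeq s t
  | fNeq s t => fEq s t
  | fT t => fNT t
  | fNT t => fT t
  | fP t => fNP t
  | fNP t => fP t
  | fAnd a b => fOr (neg a) (neg b)
  | fOr a b => fAnd (neg a) (neg b)
  | fAll a => fEx (neg a)
  | fEx a => fAll (neg a)
  end.

Fixpoint tsubst (s : nat -> term) (t : term) : term :=
  match t with
  | tvar n => s n
  | tzero => tzero
  | tsucc u => tsucc (tsubst s u)
  | tplus u v => tplus (tsubst s u) (tsubst s v)
  | tmult u v => tmult (tsubst s u) (tsubst s v)
  end.

Definition tshift (t : term) : term := tsubst (fun n => tvar (S n)) t.

Definition up (s : nat -> term) : nat -> term :=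
  fun n => match n with 0 => tvar 0 | S k => tshift (s k) end.

Fixpoint fsubst (s : nat -> term) (phi : form) : form :=
  match phi with
  | fEq a b => fEq (tsubst s a) (tsubst s b)
  | fNeq a b => fNeq (tsubst s a) (tsubst s b)
  | fT a => fT (tsubst s a)
  | fNT a => fNT (tsubst s a)
  | fP a => fP (tsubst s a)
  | fNP a => fNP (tsubst s a)
  | fAnd a b => fAnd (fsubst s a) (fsubst s b)
  | fOr a b => fOr (fsubst s a) (fsubst s b)
  | fAll a => fAll (fsubst (up s) a)
  | fEx a => fEx (fsubst (up s) a)
  end.

(* shift all free variables up by one (makes index 0 fresh) *)
Definition fshift (phi : form) : form := fsubst (fun n => tvar (S n)) phi.

(* phi(t): substitute t for the variable bound by the outermost binder
   (index 0), lowering the other free variables. *)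
Definition inst (phi : form) (t : term) : form :=
  fsubst (fun n => match n with 0 => t | S k => tvar k end) phi.

Fixpoint tclosed (k : nat) (t : term) : Prop :=
  match t with
  | tvar n => n < k
  | tzero => True
  | tsucc u => tclosed k u
  | tplus u v | tmult u v => tclosed k u /\ tclosed k v
  end.

Fixpoint fclosed (k : nat) (phi : form) : Prop :=
  match phi with
  | fEq a b | fNeq a b => tclosed k a /\ tclosed k b
  | fT a | fNT a | fP a | fNP a => tclosed k a
  | fAnd a b | fOr a b => fclosed k a /\ fclosed k b
  | fAll a | fEx a => fclosed (S k) a
  end.

Definition closed_term (t : term) : Prop := tclosed 0 t.
Definition sentence (phi : form) : Prop := fclosed 0 phi.

Fixpoint num (n : nat) : term :=
  match n with 0 => tzero | S k => tsucc (num k) end.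

(* value of a term (variables read as 0; only used on closed terms) *)
Fixpoint val (t : term) : nat :=
  match t with
  | tvar _ => 0
  | tzero => 0
  | tsucc u => S (val u)
  | tplus u v => val u + val v
  | tmult u v => val u * val v
  end.

Definition cpair (m n : nat) : nat := (m + n) * (m + n + 1) / 2 + m.

Fixpoint tcode (t : term) : nat :=
  match t with
  | tvar n => cpair 0 n
  | tzero => cpair 1 0
  | tsucc u => cpair 2 (tcode u)
  | tplus u v => cpair 3 (cpair (tcode u) (tcode v))
  | tmult u v => cpair 4 (cpair (tcode u) (tcode v))
  end.

Fixpoint code (phi : form) : nat :=
  match phi with
  | fEq a b => cpair 5 (cpair (tcode a) (tcode b))
  | fNeq a b => cpair 6 (cpair (tcode a) (tcode b))
  | fT a => cpair 7 (tcode a)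
  | fNT a => cpair 8 (tcode a)
  | fP a => cpair 9 (tcode a)
  | fNP a => cpair 10 (tcode a)
  | fAnd a b => cpair 11 (cpair (code a) (code b))
  | fOr a b => cpair 12 (cpair (code a) (code b))
  | fAll a => cpair 13 (code a)
  | fEx a => cpair 14 (code a)
  end.

Definition quote (phi : form) : term := num (code phi).

Record pmodel : Type := PM {
  Tpos : nat -> Prop;  Tneg : nat -> Prop;
  Ppos : nat -> Prop;  Pneg : nat -> Prop }.

Inductive SK (M : pmodel) : form -> Prop :=
| SK_eq   s t : val s = val t -> SK M (fEq s t)
| SK_neq  s t : val s <> val t -> SK M (fNeq s t)
| SK_T    t : Tpos M (val t) -> SK M (fT t)
| SK_NT   t : Tneg M (val t) -> SK M (fNT t)
| SK_P    t : Ppos M (val t) -> SK M (fP t)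
| SK_NP   t : Pneg M (val t) -> SK M (fNP t)
| SK_and  a b : SK M a -> SK M b -> SK M (fAnd a b)
| SK_orl  a b : SK M a -> SK M (fOr a b)
| SK_orr  a b : SK M b -> SK M (fOr a b)
| SK_all  a : (forall n, SK M (inst a (num n))) -> SK M (fAll a)
| SK_ex   a n : SK M (inst a (num n)) -> SK M (fEx a).

Definition succ_sub : nat -> term :=
  fun n => match n with 0 => tsucc (tvar 0) | S k => tvar (S k) end.

Inductive PASK : list form -> list form -> Prop :=
| D_init  phi : PASK [phi] [phi]
| D_cut   G D phi : PASK G (phi :: D) -> PASK (phi :: G) D -> PASK G D
| D_weak  G D G' D' : PASK G D -> incl G G' -> incl D D' -> PASK G' D'
| D_neg   G D phi : PASK G (phi :: D) -> PASK (neg phi :: G) D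
| D_andL  G D a b : PASK (a :: b :: G) D -> PASK (fAnd a b :: G) D
| D_andR  G D a b : PASK G (a :: D) -> PASK G (b :: D) -> PASK G (fAnd a b :: D)
| D_orL   G D a b : PASK (a :: G) D -> PASK (b :: G) D -> PASK (fOr a b :: G) D
| D_orR   G D a b : PASK G (a :: b :: D) -> PASK G (fOr a b :: D)
| D_allL  G D a t : PASK (inst a t :: G) D -> PASK (fAll a :: G) D
| D_allR  G D a : PASK (map fshift G) (a :: map fshift D) -> PASK G (fAll a :: D)
| D_exL   G D a : PASK (a :: map fshift G) (map fshift D) -> PASK (fEx a :: G) D
| D_exR   G D a t : PASK G (inst a t :: D) -> PASK G (fEx a :: D)
| D_refl  t : PASK [] [fEq t t]
| D_repl  G D a s t : PASK G (inst a t :: D) -> PASK G (fNeq s t :: inst a s :: D)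
| D_PA1 t : PASK [fEq (tsucc t) tzero] []
| D_PA2 s t : PASK [fEq (tsucc s) (tsucc t)] [fEq s t]
| D_PA3 s : PASK [] [fEq (tplus s tzero) s]
| D_PA4 s t : PASK [] [fEq (tplus s (tsucc t)) (tsucc (tplus s t))]
| D_PA5 s : PASK [] [fEq (tmult s tzero) tzero]
| D_PA6 s t : PASK [] [fEq (tmult s (tsucc t)) (tplus (tmult s t) s)]
(* induction rule for all L-formulas (index 0 is the eigenvariable) *)
| D_ind G D a t :
    PASK (a :: map fshift G) (fsubst succ_sub a :: map fshift D) ->
    PASK (inst a tzero :: G) (inst a t :: D).

Definition equivPASK (a b : form) : Prop := PASK [a] [b] /\ PASK [b] [a].

Definition base_paradoxical (phi : form) : Prop :=
  sentence phi /\
  equivPASK phi (fNT (quote phi)) /\ equivPASK (neg phi) (fT (quote phi)).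

Definition Bset (n : nat) : Prop := exists phi, base_paradoxical phi /\ code phi = n.

(* ---------- SK truth condition of the formula scrP(n) in (N,T,P) ----------
   scrP contains T, P only positively/as the literals T, ~T, P, and its
   arithmetic parts (including Pi(x) = B(x) \/ B(neg x)) are bivalent. *)
Definition SatScrP (M : pmodel) (n : nat) : Prop :=
  (exists phi, sentence phi /\ n = code phi /\ (Bset n \/ Bset (code (neg phi))))
  \/ (exists t, closed_term t /\ n = code (fT t) /\ Ppos M (val t))
  \/ (exists t, closed_term t /\ n = code (fNT t) /\ Ppos M (val t))
  \/ (exists a b, sentence (fAnd a b) /\ n = code (fAnd a b) /\
        ((Ppos M (code a) /\ Ppos M (code b)) \/
         (Tpos M (code a) /\ Ppos M (code b)) \/
         (Tpos M (code b) /\ Ppos M (code a))))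
  \/ (exists a b, sentence (fOr a b) /\ n = code (fOr a b) /\
        ((Ppos M (code a) /\ Ppos M (code b)) \/
         (Tneg M (code a) /\ Ppos M (code b)) \/
         (Tneg M (code b) /\ Ppos M (code a))))
  \/ (exists a, sentence (fAll a) /\ n = code (fAll a) /\
        (exists y, Ppos M (code (inst a (num y)))) /\
        (forall y, Ppos M (code (inst a (num y))) \/ Tpos M (code (inst a (num y)))))
  \/ (exists a, sentence (fEx a) /\ n = code (fEx a) /\
        (exists y, Ppos M (code (inst a (num y)))) /\
        (forall y, Ppos M (code (inst a (num y))) \/ Tneg M (code (inst a (num y))))).

Definition GammaTP (M : pmodel) : pmodel := {|
  Tpos := fun n => exists phi, sentence phi /\ n = code phi /\ SK M phi;
  Tneg := fun n => exists phi, sentence phi /\ n = code phi /\ SK M (neg phi);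
  Ppos := fun n => exists phi, sentence phi /\ n = code phi /\ SatScrP M (code phi);
  Pneg := fun n => exists phi, sentence phi /\ n = code phi /\ SK M (fOr phi (neg phi)) |}.

Definition pm_le (M N : pmodel) : Prop :=
  (forall n, Tpos M n -> Tpos N n) /\ (forall n, Tneg M n -> Tneg N n) /\
  (forall n, Ppos M n -> Ppos N n) /\ (forall n, Pneg M n -> Pneg N n).

Definition pm_eq (M N : pmodel) : Prop := pm_le M N /\ pm_le N M.

Definition fixed_point (M : pmodel) : Prop := pm_eq (GammaTP M) M.

Definition least_fixed_point (M : pmodel) : Prop :=
  fixed_point M /\ forall N, fixed_point N -> pm_le M N.

(** The stages of the iteration of [GammaTP] from the empty model are
    coherent: [T+] and [T-] are disjoint, [P+] and [P-] are disjoint, and [P+]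
    meets neither [T+] nor [T-].  At a coherent stage [X <= GammaTP X] no
    determinate sentence enters [P+]: a base-paradoxical sentence is not
    determinate, because PA[SK] is sound in consistent models and proves it
    equivalent to its own untruth, and the compositional clauses of scrP are
    refuted by induction on the Strong Kleene evaluation.  Coherence survives
    unions because the stages form a chain (Bourbaki-Witt).  The union of all
    stages is a fixed point, hence lies above the least one, to which
    consistency descends; soundness follows because at a consistent fixed
    point [P+] and [P-] are disjoint. *)

From Stdlib Require Import PeanoNat Lia List Classical Cantor.
Import ListNotations.

Lemma cpair_to_nat m n : cpair m n = Cantor.to_nat (n, m).
Proof.
  rewrite Cantor.to_nat_spec2; unfold cpair.
  rewrite Nat.add_1_r. apply Nat.add_comm.
Qed.

Lemma cpair_inj m n m' n' : cpair m n = cpair m' n' -> m = m' /\ n = n'.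
Proof.
  rewrite !cpair_to_nat. intros [= -> ->]%Cantor.to_nat_inj. auto.
Qed.

Lemma tcode_inj t t' : tcode t = tcode t' -> t = t'.
Proof.
  revert t'; induction t; intros []; simpl;
    intros [[=] E]%cpair_inj; try apply cpair_inj in E as [E E'];
    f_equal; auto.
Qed.

Lemma code_inj p p' : code p = code p' -> p = p'.
Proof.
  revert p'; induction p; intros []; simpl;
    intros [[=] E]%cpair_inj; try apply cpair_inj in E as [E E'];
    f_equal; auto using tcode_inj.
Qed.

Lemma neg_involutive p : neg (neg p) = p.
Proof. induction p; simpl; congruence. Qed.

Lemma inst_neg a t : inst (neg a) t = neg (inst a t).
Proof.
  unfold inst. generalize (fun n => match n with 0 => t | S k => tvar k end).
  induction a; intros s; simpl; congruence.
Qed.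

Lemma val_quote p : val (quote p) = code p.
Proof. unfold quote. induction (code p); simpl; auto. Qed.

Definition scons (n : nat) (r : nat -> nat) : nat -> nat :=
  fun k => match k with 0 => n | S j => r j end.

Fixpoint tval (r : nat -> nat) (t : term) : nat :=
  match t with
  | tvar n => r n
  | tzero => 0
  | tsucc u => S (tval r u)
  | tplus u v => tval r u + tval r v
  | tmult u v => tval r u * tval r v
  end.

Fixpoint sat (X : pmodel) (r : nat -> nat) (p : form) : Prop :=
  match p with
  | fEq a b => tval r a = tval r b
  | fNeq a b => tval r a <> tval r b
  | fT a => Tpos X (tval r a)
  | fNT a => Tneg X (tval r a)
  | fP a => Ppos X (tval r a)
  | fNP a => Pneg X (tval r a)
  | fAnd a b => sat X r a /\ sat X r b
  | fOr a b => sat X r a \/ sat X r b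
  | fAll a => forall n, sat X (scons n r) a
  | fEx a => exists n, sat X (scons n r) a
  end.

Lemma val_tval t : val t = tval (fun _ => 0) t.
Proof. induction t; simpl; auto. Qed.

Lemma tval_num r n : tval r (num n) = n.
Proof. induction n; simpl; auto. Qed.

Lemma tval_ext r r' t : (forall k, r k = r' k) -> tval r t = tval r' t.
Proof. intro E; induction t; simpl; auto. Qed.

Lemma tval_subst r s t : tval r (tsubst s t) = tval (fun k => tval r (s k)) t.
Proof. induction t; simpl; auto. Qed.

Lemma sat_ext X p : forall r r', (forall k, r k = r' k) -> (sat X r p <-> sat X r' p).
Proof.
  induction p; intros r r' E; simpl; rewrite ?(tval_ext r r' _ E); try reflexivity.
  - rewrite (IHp1 r r' E), (IHp2 r r' E); reflexivity.
  - rewrite (IHp1 r r' E), (IHp2 r r' E); reflexivity.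
  - split; intros H n; [apply (IHp (scons n r)) | apply (IHp _ (scons n r'))];
      auto; intros []; simpl; auto.
  - split; intros [n H]; exists n; [apply (IHp (scons n r)) | apply (IHp _ (scons n r'))];
      auto; intros []; simpl; auto.
Qed.

Lemma sat_subst X p : forall r s,
  sat X r (fsubst s p) <-> sat X (fun k => tval r (s k)) p.
Proof.
  assert (Hup : forall n r s k,
    tval (scons n r) (up s k) = scons n (fun k => tval r (s k)) k).
  { intros n r s []; simpl; [reflexivity|].
    unfold tshift; rewrite tval_subst; reflexivity. }
  induction p; intros r s; simpl; rewrite ?tval_subst; try reflexivity.
  - rewrite IHp1, IHp2; reflexivity.
  - rewrite IHp1, IHp2; reflexivity.
  - split; intros H n; specialize (H n); [rewrite IHp in H | rewrite IHp];
      revert H; apply sat_ext; intro k; rewrite Hup; reflexivity.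
  - split; intros [n H]; exists n; [rewrite IHp in H | rewrite IHp];
      revert H; apply sat_ext; intro k; rewrite Hup; reflexivity.
Qed.

Lemma sat_inst X r a t : sat X r (inst a t) <-> sat X (scons (tval r t) r) a.
Proof. unfold inst; rewrite sat_subst; apply sat_ext; intros []; reflexivity. Qed.

Lemma sat_fshift X r n p : sat X (scons n r) (fshift p) <-> sat X r p.
Proof. unfold fshift; rewrite sat_subst; reflexivity. Qed.

Lemma sat_succ_sub X r m a :
  sat X (scons m r) (fsubst succ_sub a) <-> sat X (scons (S m) r) a.
Proof. rewrite sat_subst; apply sat_ext; intros []; reflexivity. Qed.

Lemma SK_sat X p : SK X p -> sat X (fun _ => 0) p.
Proof.
  induction 1 as [| | | | | | | | | a _ IH | a n _ IH]; simpl;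
    rewrite <- ?val_tval; auto.
  - intro n. specialize (IH n). rewrite sat_inst, tval_num in IH. exact IH.
  - exists n. rewrite sat_inst, tval_num in IH. exact IH.
Qed.

(** * Soundness of PA[SK] in consistent models *)

Definition consistent (X : pmodel) : Prop :=
  (forall n, ~ (Tpos X n /\ Tneg X n)) /\ (forall n, ~ (Ppos X n /\ Pneg X n)).

Lemma sat_not_both X p : consistent X ->
  forall r, sat X r p -> sat X r (neg p) -> False.
Proof.
  intros [HT HP]; induction p; intros r H Hn; simpl in *;
    firstorder eauto.
Qed.

Lemma SK_not_both X p : consistent X -> SK X p -> SK X (neg p) -> False.
Proof. intros HX H%SK_sat Hn%SK_sat; exact (sat_not_both X p HX _ H Hn). Qed.

Definition valid (X : pmodel) (G D : list form) : Prop :=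
  forall r, Forall (sat X r) G -> Exists (sat X r) D.

Lemma Forall_sat_fshift X r n G :
  Forall (sat X (scons n r)) (map fshift G) <-> Forall (sat X r) G.
Proof. rewrite Forall_map; split; apply Forall_impl; intro; apply sat_fshift. Qed.

Lemma Exists_sat_fshift X r n D :
  Exists (sat X (scons n r)) (map fshift D) <-> Exists (sat X r) D.
Proof. rewrite Exists_map; split; apply Exists_impl; intro; apply sat_fshift. Qed.

Lemma valid_allR X G D a :
  valid X (map fshift G) (a :: map fshift D) -> valid X G (fAll a :: D).
Proof.
  intros H r HG. apply Exists_cons.
  destruct (classic (Exists (sat X r) D)) as [HD | HD]; [now right | left].
  intro n. specialize (H (scons n r)).
  rewrite Forall_sat_fshift, Exists_cons, Exists_sat_fshift in H. tauto.
Qed.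

Lemma valid_exL X G D a :
  valid X (a :: map fshift G) (map fshift D) -> valid X (fEx a :: G) D.
Proof.
  intros H r [[n Ha] HG]%Forall_cons_iff.
  apply (Exists_sat_fshift X r n), H, Forall_cons; [exact Ha|].
  now apply Forall_sat_fshift.
Qed.

Lemma valid_ind X G D a t :
  valid X (a :: map fshift G) (fsubst succ_sub a :: map fshift D) ->
  valid X (inst a tzero :: G) (inst a t :: D).
Proof.
  intros H r [H0 HG]%Forall_cons_iff.
  assert (Hall : forall m, sat X (scons m r) a \/ Exists (sat X r) D).
  { induction m as [|m [Hm | HD]]; [left | | now right].
    - now apply sat_inst in H0.
    - specialize (H (scons m r)).
      rewrite Forall_cons_iff, Forall_sat_fshift, Exists_cons,
        sat_succ_sub, Exists_sat_fshift in H.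
      tauto. }
  apply Exists_cons; rewrite sat_inst. destruct (Hall (tval r t)); tauto.
Qed.

Theorem PASK_sound X G D : consistent X -> PASK G D -> valid X G D.
Proof.
  intros HX. induction 1 as [phi | G D phi _ IH1 _ IH2 | G D G' D' _ IH HG HD
    | G D phi _ IH | G D a b _ IH | G D a b _ IH1 _ IH2 | G D a b _ IH1 _ IH2
    | G D a b _ IH | G D a t _ IH | G D a _ IH | G D a _ IH | G D a t _ IH
    | t | G D a s t _ IH | t | s t | s | s t | s | s t | G D a t _ IH];
    try (apply valid_allR || apply valid_exL || apply valid_ind; assumption);
    intros r HG0; rewrite ?Forall_cons_iff in HG0; rewrite ?Exists_cons; simpl in *.
  - tauto.
  - pose proof (IH1 r HG0) as [Hphi | HD]%Exists_cons; auto.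
  - apply (incl_Exists HD), IH, (incl_Forall HG), HG0.
  - destruct HG0 as [Hn HG0]. apply IH, Exists_cons in HG0 as [Hphi | HD]; auto.
    exfalso; exact (sat_not_both X phi HX r Hphi Hn).
  - apply IH. rewrite !Forall_cons_iff. tauto.
  - pose proof (IH1 r HG0) as [Ha | HD]%Exists_cons; auto.
    pose proof (IH2 r HG0) as [Hb | HD]%Exists_cons; auto.
  - destruct HG0 as [[Ha | Hb] HG0]; [apply IH1 | apply IH2]; constructor; auto.
  - apply IH in HG0. rewrite !Exists_cons in HG0. tauto.
  - destruct HG0 as [Ha HG0]. apply IH. constructor; [apply sat_inst, Ha | exact HG0].
  - apply IH, Exists_cons in HG0 as [Ha | HD]; auto.
    left. exists (tval r t). now apply sat_inst.
  - now left.
  - apply IH, Exists_cons in HG0 as [Ha | HD]; auto.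
    destruct (Nat.eq_dec (tval r s) (tval r t)) as [E | E]; [right; left | now left].
    rewrite sat_inst, E; now apply sat_inst.
  - discriminate (proj1 HG0).
  - left. now injection (proj1 HG0).
  - left; lia.
  - left; lia.
  - left; lia.
  - left; lia.
Qed.

Corollary PASK_sound_single X a b :
  consistent X -> PASK [a] [b] -> SK X a -> sat X (fun _ => 0) b.
Proof.
  intros HX Hab Ha%SK_sat.
  pose proof (PASK_sound X _ _ HX Hab _ (Forall_cons _ Ha (Forall_nil _)))
    as [Hb | []%Exists_nil]%Exists_cons.
  exact Hb.
Qed.

(** * Monotonicity and coherence of the jump *)

Lemma pm_le_refl X : pm_le X X.
Proof. repeat split; auto. Qed.

Lemma pm_le_trans X Y Z : pm_le X Y -> pm_le Y Z -> pm_le X Z.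
Proof. intros (? & ? & ? & ?) (? & ? & ? & ?); repeat split; auto. Qed.

Lemma SK_mono X Y p : pm_le X Y -> SK X p -> SK Y p.
Proof.
  intros (? & ? & ? & ?); induction 1;
    solve [econstructor; eauto | apply SK_orr; auto].
Qed.

Lemma SatScrP_mono X Y n : pm_le X Y -> SatScrP X n -> SatScrP Y n.
Proof.
  intros (HTp & HTn & HPp & _).
  intros [H | [(t & Ht & E & H) | [(t & Ht & E & H) | [(a & b & Hs & E & H)
    | [(a & b & Hs & E & H) | [(a & Hs & E & [y Hy] & H)
    | (a & Hs & E & [y Hy] & H)]]]]]].
  - now left.
  - right; left; eauto.
  - do 2 right; left; eauto.
  - do 3 right; left; exists a, b; intuition auto.
  - do 4 right; left; exists a, b; intuition auto.
  - do 5 right; left; exists a; repeat split; eauto.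
    intro z; destruct (H z); auto.
  - do 6 right; exists a; repeat split; eauto.
    intro z; destruct (H z); auto.
Qed.

Lemma GammaTP_mono X Y : pm_le X Y -> pm_le (GammaTP X) (GammaTP Y).
Proof.
  intros HXY; repeat split; simpl; intros n (p & Hp & -> & H); exists p;
    eauto using SK_mono, SatScrP_mono.
Qed.

Lemma consistent_le X Y : pm_le X Y -> consistent Y -> consistent X.
Proof.
  intros (HTp & HTn & HPp & HPn) [HT HP]; split; intros n [H1 H2];
    [apply (HT n) | apply (HP n)]; auto.
Qed.

Lemma Bset_code p : Bset (code p) -> base_paradoxical p.
Proof. intros (q & Hq & E%code_inj); subst q; exact Hq. Qed.

Definition Pclause (X : pmodel) (p : form) : Prop :=
  match p with
  | fT t | fNT t => Ppos X (val t)
  | fAnd a b =>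
      (Ppos X (code a) /\ Ppos X (code b)) \/ (Tpos X (code a) /\ Ppos X (code b)) \/
      (Tpos X (code b) /\ Ppos X (code a))
  | fOr a b =>
      (Ppos X (code a) /\ Ppos X (code b)) \/ (Tneg X (code a) /\ Ppos X (code b)) \/
      (Tneg X (code b) /\ Ppos X (code a))
  | fAll a =>
      (exists y, Ppos X (code (inst a (num y)))) /\
      (forall y, Ppos X (code (inst a (num y))) \/ Tpos X (code (inst a (num y))))
  | fEx a =>
      (exists y, Ppos X (code (inst a (num y)))) /\
      (forall y, Ppos X (code (inst a (num y))) \/ Tneg X (code (inst a (num y))))
  | _ => False
  end.

Lemma SatScrP_code_inv X p :
  SatScrP X (code p) -> (Bset (code p) \/ Bset (code (neg p))) \/ Pclause X p.
Proof.
  unfold SatScrP.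
  intros [(q & _ & E & H) | [(t & _ & E & H) | [(t & _ & E & H) | [(a & b & _ & E & H)
    | [(a & b & _ & E & H) | [(a & _ & E & H) | (a & _ & E & H)]]]]]];
    apply code_inj in E; subst; [left | right ..]; exact H.
Qed.

Record coherent (X : pmodel) : Prop := {
  coherent_consistent : consistent X;
  coherent_Ppos_Tpos : forall n, ~ (Ppos X n /\ Tpos X n);
  coherent_Ppos_Tneg : forall n, ~ (Ppos X n /\ Tneg X n) }.

Section Jump.

Variable X : pmodel.
Hypothesis X_coherent : coherent X.
Hypothesis X_inflationary : pm_le X (GammaTP X).

Let X_consistent : consistent X := coherent_consistent X X_coherent.

Lemma Tpos_SK p : Tpos X (code p) -> SK X p.
Proof.
  intros (q & _ & E%code_inj & Hq)%(proj1 X_inflationary); subst q; exact Hq.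
Qed.

Lemma Tneg_SK p : Tneg X (code p) -> SK X (neg p).
Proof.
  intros (q & _ & E%code_inj & Hq)%(proj1 (proj2 X_inflationary)); subst q; exact Hq.
Qed.

Lemma Ppos_SatScrP p : Ppos X (code p) -> SatScrP X (code p).
Proof.
  intros (q & _ & E%code_inj & Hq)%(proj1 (proj2 (proj2 X_inflationary))).
  subst q; exact Hq.
Qed.

Lemma base_paradoxical_not_SK p : base_paradoxical p -> ~ SK X p /\ ~ SK X (neg p).
Proof.
  intros (_ & [Hp _] & [Hnp _]); split; intro H.
  - apply (SK_not_both X p X_consistent H), Tneg_SK.
    pose proof (PASK_sound_single X _ _ X_consistent Hp H) as Hq; simpl in Hq.
    now rewrite <- val_tval, val_quote in Hq.
  - apply (SK_not_both X p X_consistent); [apply Tpos_SK | exact H].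
    pose proof (PASK_sound_single X _ _ X_consistent Hnp H) as Hq; simpl in Hq.
    now rewrite <- val_tval, val_quote in Hq.
Qed.

Lemma Pi_not_SK p : Bset (code p) \/ Bset (code (neg p)) -> ~ SK X p.
Proof.
  intros [Hp%Bset_code | Hnp%Bset_code].
  - apply (base_paradoxical_not_SK p Hp).
  - rewrite <- (neg_involutive p). apply (base_paradoxical_not_SK _ Hnp).
Qed.

Lemma not_SatScrP_of_Pclause p :
  SK X p -> ~ Pclause X p -> ~ Pclause X (neg p) ->
  ~ SatScrP X (code p) /\ ~ SatScrP X (code (neg p)).
Proof.
  intros Hp Hc Hnc; split; intros [Hpi | ?]%SatScrP_code_inv; try contradiction.
  - exact (Pi_not_SK p Hpi Hp).
  - rewrite neg_involutive in Hpi. apply (Pi_not_SK p); tauto.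
Qed.

Lemma SK_not_Tneg p : SK X p -> ~ Tneg X (code p).
Proof. intros Hp Hn%Tneg_SK; exact (SK_not_both X p X_consistent Hp Hn). Qed.

Lemma SK_not_Tpos_neg p : SK X p -> ~ Tpos X (code (neg p)).
Proof. intros Hp Hn%Tpos_SK; exact (SK_not_both X p X_consistent Hp Hn). Qed.

Lemma SK_not_SatScrP p :
  SK X p -> ~ SatScrP X (code p) /\ ~ SatScrP X (code (neg p)).
Proof.
  assert (not_Ppos : forall q, ~ SatScrP X (code q) -> ~ Ppos X (code q))
    by (intros q Hq H; exact (Hq (Ppos_SatScrP q H))).
  intros Hp; induction Hp as [s t | s t | t Ht | t Ht | t | t
    | a b Ha [IHa IHna] Hb [IHb IHnb] | a b Ha [IHa IHna] | a b Hb [IHb IHnb]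
    | a Ha IH | a n Ha [IH IHn]];
    apply not_SatScrP_of_Pclause; try solve [econstructor; eauto | simpl; tauto];
    simpl.
  - intro H; exact (coherent_Ppos_Tpos X X_coherent _ (conj H Ht)).
  - intro H; exact (coherent_Ppos_Tpos X X_coherent _ (conj H Ht)).
  - intro H; exact (coherent_Ppos_Tneg X X_coherent _ (conj H Ht)).
  - intro H; exact (coherent_Ppos_Tneg X X_coherent _ (conj H Ht)).
  - apply not_Ppos in IHa, IHb; tauto.
  - apply not_Ppos in IHna, IHnb; tauto.
  - pose proof (SK_not_Tneg a Ha); apply not_Ppos in IHa; tauto.
  - pose proof (SK_not_Tpos_neg a Ha); apply not_Ppos in IHna; tauto.
  - pose proof (SK_not_Tneg b Hb); apply not_Ppos in IHb; tauto.
  - pose proof (SK_not_Tpos_neg b Hb); apply not_Ppos in IHnb; tauto.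
  - intros [[y Hy] _]; exact (not_Ppos _ (proj1 (IH y)) Hy).
  - intros [[y Hy] _]; rewrite inst_neg in Hy; exact (not_Ppos _ (proj2 (IH y)) Hy).
  - intros [_ Hall]; destruct (Hall n) as [Hy | Hy].
    + exact (not_Ppos _ IH Hy).
    + exact (SK_not_Tneg _ Ha Hy).
  - intros [_ Hall]; destruct (Hall n) as [Hy | Hy]; rewrite inst_neg in Hy.
    + exact (not_Ppos _ IHn Hy).
    + exact (SK_not_Tpos_neg _ Ha Hy).
Qed.

Lemma determinate_not_SatScrP p : SK X p \/ SK X (neg p) -> ~ SatScrP X (code p).
Proof.
  intros [Hp | Hnp].
  - exact (proj1 (SK_not_SatScrP p Hp)).
  - rewrite <- (neg_involutive p). exact (proj2 (SK_not_SatScrP _ Hnp)).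
Qed.

Lemma GammaTP_coherent : coherent (GammaTP X).
Proof.
  repeat split; simpl; intros n [(p & _ & -> & Hp) (q & _ & E%code_inj & Hq)]; subst q.
  - exact (SK_not_both X p X_consistent Hp Hq).
  - inversion Hq; subst; apply (determinate_not_SatScrP p); auto.
  - apply (determinate_not_SatScrP p); auto.
  - apply (determinate_not_SatScrP p); auto.
Qed.

End Jump.

(** * The transfinite iteration *)

Definition pm_sup (S : pmodel -> Prop) : pmodel := {|
  Tpos := fun n => exists Y, S Y /\ Tpos Y n;
  Tneg := fun n => exists Y, S Y /\ Tneg Y n;
  Ppos := fun n => exists Y, S Y /\ Ppos Y n;
  Pneg := fun n => exists Y, S Y /\ Pneg Y n |}.

Lemma pm_sup_ub S Y : S Y -> pm_le Y (pm_sup S).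
Proof. intro HY; repeat split; simpl; intros n H; exists Y; auto. Qed.

Lemma pm_sup_least S Z : (forall Y, S Y -> pm_le Y Z) -> pm_le (pm_sup S) Z.
Proof.
  intro H; repeat split; simpl; intros n (Y & HY & Hn);
    destruct (H Y HY) as (? & ? & ? & ?); auto.
Qed.

Definition directed (S : pmodel -> Prop) : Prop :=
  forall Y1 Y2, S Y1 -> S Y2 -> exists Z, S Z /\ pm_le Y1 Z /\ pm_le Y2 Z.

Lemma pm_sup_disjoint S (A B : pmodel -> nat -> Prop) :
  directed S ->
  (forall Y Z n, pm_le Y Z -> A Y n -> A Z n) ->
  (forall Y Z n, pm_le Y Z -> B Y n -> B Z n) ->
  (forall Y n, S Y -> ~ (A Y n /\ B Y n)) ->
  forall n, ~ ((exists Y, S Y /\ A Y n) /\ (exists Y, S Y /\ B Y n)).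
Proof.
  intros HS HA HB Hdisj n [(Y1 & H1 & HA1) (Y2 & H2 & HB2)].
  destruct (HS Y1 Y2 H1 H2) as (Z & HZ & Hle1 & Hle2).
  exact (Hdisj Z n HZ (conj (HA _ _ _ Hle1 HA1) (HB _ _ _ Hle2 HB2))).
Qed.

Lemma coherent_pm_sup S :
  directed S -> (forall Y, S Y -> coherent Y) -> coherent (pm_sup S).
Proof.
  intros HS Hcoh; repeat split; apply pm_sup_disjoint; auto;
    try (intros Y Z n Hle; apply Hle);
    intros Y n HY; apply Hcoh in HY as [[HT HP] HPT HPF]; auto.
Qed.

Section Tower.

Variable F : pmodel -> pmodel.
Hypothesis F_mono : forall X Y, pm_le X Y -> pm_le (F X) (F Y).

Inductive tower : pmodel -> Prop :=
  | tower_step X : tower X -> tower (F X)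
  | tower_sup S : (forall Y, S Y -> tower Y) -> tower (pm_sup S).

Lemma tower_inflationary X : tower X -> pm_le X (F X).
Proof.
  induction 1 as [X _ IH | S _ IH].
  - exact (F_mono _ _ IH).
  - apply pm_sup_least; intros Y HY.
    exact (pm_le_trans _ _ _ (IH Y HY) (F_mono _ _ (pm_sup_ub S Y HY))).
Qed.

(* Extreme points in the Bourbaki-Witt proof that the tower is a chain. *)
Definition extreme (c : pmodel) : Prop :=
  forall x, tower x -> pm_le x c -> ~ pm_le c x -> pm_le (F x) c.

Lemma extreme_split c : extreme c ->
  forall x, tower x -> pm_le x c \/ pm_le (F c) x.
Proof.
  intros Hc x Hx; induction Hx as [x Hx [Hle | Hge] | S HS IH].
  - destruct (classic (pm_le c x)) as [Hcx | Hcx].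
    + right; exact (F_mono _ _ Hcx).
    + left; exact (Hc x Hx Hle Hcx).
  - right; exact (pm_le_trans _ _ _ Hge (tower_inflationary x Hx)).
  - destruct (classic (exists Y, S Y /\ pm_le (F c) Y)) as [(Y & HY & Hge) | Hno].
    + right; exact (pm_le_trans _ _ _ Hge (pm_sup_ub S Y HY)).
    + left; apply pm_sup_least; intros Y HY.
      destruct (IH Y HY) as [Hle | Hge]; [exact Hle | exfalso; eauto].
Qed.

Lemma tower_extreme c : tower c -> extreme c.
Proof.
  induction 1 as [c _ IH | S HS IH]; intros x Hx Hle Hnge.
  - destruct (extreme_split c IH x Hx) as [Hxc | Hcx]; [|contradiction].
    exact (F_mono _ _ Hxc).
  - destruct (classic (forall Y, S Y -> pm_le Y x)) as [Hall | Hex].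
    + contradiction (Hnge (pm_sup_least S x Hall)).
    + apply not_all_ex_not in Hex as [Y HY].
      apply imply_to_and in HY as [HY HYx].
      destruct (extreme_split Y (IH Y HY) x Hx) as [HxY | HYx'].
      * exact (pm_le_trans _ _ _ (IH Y HY x Hx HxY HYx) (pm_sup_ub S Y HY)).
      * contradiction (HYx (pm_le_trans _ _ _ (tower_inflationary Y (HS Y HY)) HYx')).
Qed.

Lemma tower_total x y : tower x -> tower y -> pm_le x y \/ pm_le y x.
Proof.
  intros Hx Hy; destruct (extreme_split y (tower_extreme y Hy) x Hx) as [Hxy | Hyx].
  - now left.
  - right; exact (pm_le_trans _ _ _ (tower_inflationary y Hy) Hyx).
Qed.

Lemma tower_directed S : (forall Y, S Y -> tower Y) -> directed S.
Proof.
  intros HS Y1 Y2 H1 H2.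
  destruct (tower_total Y1 Y2 (HS Y1 H1) (HS Y2 H2)) as [H | H];
    [exists Y2 | exists Y1]; auto using pm_le_refl.
Qed.

Lemma pm_sup_tower_fixed :
  tower (pm_sup tower) /\ pm_eq (F (pm_sup tower)) (pm_sup tower).
Proof.
  assert (Htop : tower (pm_sup tower)) by (apply tower_sup; auto).
  split; [exact Htop | split].
  - exact (pm_sup_ub tower _ (tower_step _ Htop)).
  - exact (tower_inflationary _ Htop).
Qed.

End Tower.

Lemma tower_coherent X : tower GammaTP X -> coherent X.
Proof.
  induction 1 as [X HX IH | S HS IH].
  - exact (GammaTP_coherent X IH (tower_inflationary GammaTP GammaTP_mono X HX)).
  - exact (coherent_pm_sup S (tower_directed GammaTP GammaTP_mono S HS) IH).
Qed.

Lemma consistent_fixed_point_sound M phi :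
  fixed_point M -> consistent M -> sentence phi ->
  ~ (SK M (fOr phi (neg phi)) /\ SatScrP M (code phi)).
Proof.
  intros [(_ & _ & HPpos & HPneg) _] [_ HP] Hphi [Hdet Hpar].
  apply (HP (code phi)); split.
  - apply HPpos; exists phi; auto.
  - apply HPneg; exists phi; auto.
Qed.

Theorem mainTheorem8 (M : pmodel) :
  least_fixed_point M ->
  ((forall n, ~ (Tpos M n /\ Tneg M n)) /\ (forall n, ~ (Ppos M n /\ Pneg M n))) /\
  (forall phi, sentence phi ->
     ~ SK M (fOr phi (neg phi)) \/ ~ SatScrP M (code phi)).
Proof.
  intros [HM Hleast].
  destruct (pm_sup_tower_fixed GammaTP GammaTP_mono) as [Htop Hfix].
  assert (HMcons : consistent M).
  { apply (consistent_le M _ (Hleast _ Hfix)).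
    exact (coherent_consistent _ (tower_coherent _ Htop)). }
  split; [exact HMcons|].
  intros phi Hphi; apply not_and_or.
  exact (consistent_fixed_point_sound M phi HM HMcons Hphi).
Qed.
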